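(* Let $(X_k)_{k\ge1}$ be a random walk on a finite vertex set $V$ (possibly non-Markovian and non-stationary). For an initial node $u\in V$ (i.e., $X_1=u$), assume $K(u,\{v\})<\infty$ for all $v\in V$. Then $S\mapsto K(u,S)$ is supermodular on the nonempty subsets of $V$: for all nonempty $S\subseteq T\subseteq V$ and $v\in V\setminus T$, $K(u,S\cup\{v\})-K(u,S)\le K(u,T\cup\{v\})-K(u,T)$. Consequently, for any probability distribution $\pi$ on $V$ (with these finiteness assumptions holding for each $u$ in the support of $\pi$), $K(\pi,S)=\sum_{u\in V}\pi(u)K(u,S)$ is also supermodular on the nonempty subsets of $V$.
   Context: A random walk on $V$ is a discrete-time random process $X_1,X_2,\dots$ with values in $V$ whose law is given by arbitrary conditional distributions $\Pr(X_k=\cdot\mid X_1,\dots,X_{k-1})$. For nonempty $S\subseteq V$, $\kappa(S)=\min\{k: X_k=X_1 \text{ and } X_j\in S \text{ for some } j<k\}$, and the commute time from $u$ is $K(u,S)=\mathbf{E}[\kappa(S)\mid X_1=u]$. Supermodular means the negative is submodular, where $f$ is submodular if $f(S\cup\{v\})-f(S)\ge f(T\cup\{v\})-f(T)$ for $S\subseteq T$, $v\notin T$. *)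

From mathcomp Require Import all_boot.
From Stdlib Require Import Reals.
Set Implicit Arguments. Unset Strict Implicit. Unset Printing Implicit Defensive.

(* A general (possibly non-Markovian, non-stationary) random walk on a finite
   set V is given by its conditional laws:
     p h v = Pr(X_{k} = v | (X_1,...,X_{k-1}) = h)   for every nonempty history h. *)
Definition is_kernel (V : finType) (p : seq V -> V -> R) : Prop :=
  forall h : seq V, h <> [::] ->
    (forall v, (0 <= p h v)%R) /\ \big[Rplus/R0]_(v : V) p h v = R1.

(* Probability of the prefix (X_1,...,X_n) = t, conditionally on X_1 = t_1. *)
Definition pathprob (V : finType) (p : seq V -> V -> R) (n : nat)
    (t : n.-tuple V) : R :=
  \big[Rmult/R1]_(i < n | (0 < i)%N) p (take i t) (tnth t i).

(* The trajectory t = (x_1,...,x_n) has already reached time kappa(S), i.e.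
   there are positions j < m with x_m = x_1 and x_j in S. *)
Definition stopped (V : finType) (S : {set V}) (n : nat) (t : n.+1.-tuple V) : bool :=
  [exists m : 'I_n.+1, [exists j : 'I_n.+1,
     [&& (j < m)%N, tnth t j \in S & tnth t m == thead t]]].

(* Pr(kappa(S) > k.+1 | X_1 = u). *)
Definition surv (V : finType) (p : seq V -> V -> R) (u : V) (S : {set V})
    (k : nat) : R :=
  \big[Rplus/R0]_(t : k.+1.-tuple V | (thead t == u) && ~~ stopped S t)
     pathprob p t.

Definition tail_prob (V : finType) (p : seq V -> V -> R) (u : V) (S : {set V})
    (k : nat) : R :=
  match k with 0 => R1 | k'.+1 => surv p u S k' end.

(* K(u,S) is finite and equals l:  E[kappa(S) | X_1 = u] = sum_{k>=0} Pr(kappa(S) > k) = l. *)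
Definition commute_time (V : finType) (p : seq V -> V -> R) (u : V)
    (S : {set V}) (l : R) : Prop :=
  infinite_sum (tail_prob p u S) l.

Definition supermodular_ne (V : finType) (F : {set V} -> R) : Prop :=
  forall (S T : {set V}) (v : V),
    S != set0 -> S \subset T -> v \notin T ->
    (F (v |: S) - F S <= F (v |: T) - F T)%R.

Definition is_distribution (V : finType) (pi : V -> R) : Prop :=
  (forall u, (0 <= pi u)%R) /\ \big[Rplus/R0]_(u : V) pi u = R1.

(* For a trajectory prefix t, κ(S) has not yet occurred iff t is not [stopped]
   by S, and t is stopped by S ∪ {v} iff it is stopped by S or by {v}.  Hence
   the indicator of survival, 1 - 1[stopped S ∨ stopped {v}], has increments
   in S that grow with S (pathwise supermodularity, with no assumption on the
   law of the walk).  Taking expectations, each Pr(κ(S) > k | X_1 = u) is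
   supermodular, and so is K(u,S) = Σ_k Pr(κ(S) > k | X_1 = u), a limit of
   supermodular partial sums.  Finiteness of K(u,{v}) for all v gives
   finiteness of K(u,S) for nonempty S, since κ(S) ≤ κ({v}) when v ∈ S.
   Nonnegative mixtures preserve supermodularity. *)
From HB Require Import structures.
From mathcomp Require Import all_boot.
From Stdlib Require Import Reals Lra ClassicalEpsilon.

Set Implicit Arguments. Unset Strict Implicit. Unset Printing Implicit Defensive.

Lemma RplusA : associative Rplus. Proof. by move=> *; rewrite Rplus_assoc. Qed.
HB.instance Definition _ := Monoid.isComLaw.Build R R0 Rplus RplusA Rplus_comm Rplus_0_l.

Lemma Rsum_ge0 (I : finType) (P : pred I) (f : I -> R) :
  (forall i, P i -> 0 <= f i)%R -> (0 <= \big[Rplus/R0]_(i | P i) f i)%R.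
Proof.
by move=> f_ge0; apply: (big_ind (fun x => 0 <= x)%R) => // *; lra.
Qed.

Lemma Rsum_le (I : finType) (P : pred I) (f g : I -> R) :
  (forall i, P i -> f i <= g i)%R ->
  (\big[Rplus/R0]_(i | P i) f i <= \big[Rplus/R0]_(i | P i) g i)%R.
Proof.
by move=> fg; apply: (big_ind2 (fun x y => x <= y)%R) => // *; lra.
Qed.

Lemma Rsum_sub_le (I : finType) (P : pred I) (f g h k : I -> R) :
  (forall i, P i -> f i - g i <= h i - k i)%R ->
  (\big[Rplus/R0]_(i | P i) f i - \big[Rplus/R0]_(i | P i) g i <=
   \big[Rplus/R0]_(i | P i) h i - \big[Rplus/R0]_(i | P i) k i)%R.
Proof.
move=> le_fghk.
suff: (\big[Rplus/R0]_(i | P i) (f i + k i) <= \big[Rplus/R0]_(i | P i) (h i + g i))%R.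
  by rewrite !big_split /=; lra.
by apply: Rsum_le => i Pi; have := le_fghk i Pi; lra.
Qed.

Lemma infinite_sum_sub_le (a b c d : nat -> R) (la lb lc ld : R) :
  infinite_sum a la -> infinite_sum b lb ->
  infinite_sum c lc -> infinite_sum d ld ->
  (forall k, a k - b k <= c k - d k)%R -> (la - lb <= lc - ld)%R.
Proof.
move=> sa sb sc sd le_abcd.
have le_partial n : (sum_f_R0 a n + sum_f_R0 d n <= sum_f_R0 c n + sum_f_R0 b n)%R.
  by rewrite -!sum_plus; apply: sum_growing => k; have := le_abcd k; lra.
have := Rle_cv_lim le_partial (CV_plus _ _ _ _ sa sd) (CV_plus _ _ _ _ sc sb).
lra.
Qed.

Lemma supermodular_ne_sum (V I : finType) (w : I -> R) (F : I -> {set V} -> R) :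
  (forall i, 0 <= w i)%R -> (forall i, 0 < w i -> supermodular_ne (F i))%R ->
  supermodular_ne (fun S => \big[Rplus/R0]_(i : I) (w i * F i S)%R).
Proof.
move=> w_ge0 F_super S T v S0 ST vT; apply: Rsum_sub_le => i _.
have [w_gt0 | <-] := Rle_lt_or_eq_dec _ _ (w_ge0 i); last by lra.
have := Rmult_le_compat_l _ _ _ (w_ge0 i) (F_super i w_gt0 S T v S0 ST vT).
lra.
Qed.

Section Walk.
Variables (V : finType) (p : seq V -> V -> R).

Lemma stoppedU (A B : {set V}) n (t : n.+1.-tuple V) :
  stopped (A :|: B) t = stopped A t || stopped B t.
Proof.
apply/idP/idP.
  case/existsP=> m /existsP [j /and3P [jm]]; rewrite in_setU => /orP [] jAB e.
    by apply/orP; left; apply/existsP; exists m; apply/existsP; exists j; rewrite jm jAB e.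
  by apply/orP; right; apply/existsP; exists m; apply/existsP; exists j; rewrite jm jAB e.
case/orP=> /existsP [m /existsP [j /and3P [jm jAB e]]];
  apply/existsP; exists m; apply/existsP; exists j; by rewrite jm in_setU jAB ?orbT e.
Qed.

Lemma stoppedS (A B : {set V}) n (t : n.+1.-tuple V) :
  A \subset B -> stopped A t -> stopped B t.
Proof. by move=> AB; rewrite -(setUidPr AB) stoppedU => ->. Qed.

Definition surv_weight (S : {set V}) n (t : n.+1.-tuple V) : R :=
  if stopped S t then R0 else pathprob p t.

Lemma survE u S k :
  surv p u S k = \big[Rplus/R0]_(t : k.+1.-tuple V | thead t == u) surv_weight S t.
Proof.
by rewrite /surv big_mkcondr; apply: eq_bigr => t _; rewrite /surv_weight; case: stopped.
Qed.

Hypothesis p_kernel : is_kernel p.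

Lemma pathprob_ge0 n (t : n.-tuple V) : (0 <= pathprob p t)%R.
Proof.
apply: (big_ind (fun x => 0 <= x)%R); [lra | exact: Rmult_le_pos |].
move=> i i_gt0; have take_neq0 : take i t <> [::].
  by move/(congr1 size); rewrite size_take size_tuple ltn_ord => i0; rewrite i0 in i_gt0.
exact: (p_kernel take_neq0).1.
Qed.

Lemma surv_weight_le (S T : {set V}) n (t : n.+1.-tuple V) :
  S \subset T -> (0 <= surv_weight T t <= surv_weight S t)%R.
Proof.
move=> ST; rewrite /surv_weight; have := stoppedS (t := t) ST; have := pathprob_ge0 t.
case: (stopped S t); case: (stopped T t) => //= pp_ge0 stopT; try lra.
by have := stopT isT.
Qed.

Lemma surv_weight_supermodular (S T : {set V}) v n (t : n.+1.-tuple V) :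
  S \subset T ->
  (surv_weight (v |: S) t - surv_weight S t <=
   surv_weight (v |: T) t - surv_weight T t)%R.
Proof.
move=> ST; rewrite /surv_weight !stoppedU; have := stoppedS (t := t) ST.
have := pathprob_ge0 t.
case: (stopped S t); case: (stopped T t); case: (stopped [set v] t) => //= pp_ge0 stopT;
  try lra; by have := stopT isT.
Qed.

Lemma tail_prob_le u (S T : {set V}) k :
  S \subset T -> (0 <= tail_prob p u T k <= tail_prob p u S k)%R.
Proof.
case: k => [|k] ST /=; first lra.
rewrite !survE; split; first by apply: Rsum_ge0 => t _; case: (surv_weight_le t ST).
by apply: Rsum_le => t _; case: (surv_weight_le t ST).
Qed.

Lemma tail_prob_supermodular u (S T : {set V}) v k : S \subset T ->
  (tail_prob p u (v |: S) k - tail_prob p u S k <=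
   tail_prob p u (v |: T) k - tail_prob p u T k)%R.
Proof.
case: k => [|k] ST /=; first lra.
by rewrite !survE; apply: Rsum_sub_le => t _; apply: surv_weight_supermodular.
Qed.

Lemma commute_time_exists u (S : {set V}) :
  (forall v, exists l, commute_time p u [set v] l) ->
  S != set0 -> exists l, commute_time p u S l.
Proof.
move=> ct_single /set0Pn [v vS]; have [l ct_v] := ct_single v.
have tail_le k : (0 <= tail_prob p u S k <= tail_prob p u [set v] k)%R.
  by apply: tail_prob_le; rewrite sub1set.
have [l' ct_S] := Rseries_CV_comp _ _ tail_le (exist _ l ct_v).
by exists l'.
Qed.

Definition commute_value u (S : {set V}) : R :=
  epsilon (inhabits R0) (commute_time p u S).

Lemma commute_valueP u S :
  (exists l, commute_time p u S l) -> commute_time p u S (commute_value u S).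
Proof. exact: epsilon_spec. Qed.

Lemma commute_value_supermodular u :
  (forall v, exists l, commute_time p u [set v] l) ->
  supermodular_ne (commute_value u).
Proof.
move=> ct_single S T v S0 ST _.
have ct (A : {set V}) : S \subset A -> commute_time p u A (commute_value u A).
  move=> SA; apply/commute_valueP/(commute_time_exists ct_single).
  by apply: contraNneq S0 => A0; rewrite -subset0 -A0.
apply: (infinite_sum_sub_le (ct _ (subsetUr _ _)) (ct _ (subxx S))
          (ct _ (subset_trans ST (subsetUr _ _))) (ct _ ST)).
by move=> k; apply: tail_prob_supermodular.
Qed.

End Walk.

Theorem lemma10 (V : finType) (p : seq V -> V -> R) (Hp : is_kernel p) :
  (forall u : V,
     (forall v : V, exists l : R, commute_time p u [set v] l) ->
     exists K : {set V} -> R,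
       (forall S : {set V}, S != set0 -> commute_time p u S (K S)) /\
       supermodular_ne K)
  /\
  (forall pi : V -> R, is_distribution pi ->
     (forall u : V, (0 < pi u)%R ->
        forall v : V, exists l : R, commute_time p u [set v] l) ->
     exists K : V -> {set V} -> R,
       (forall (u : V) (S : {set V}), (0 < pi u)%R -> S != set0 ->
          commute_time p u S (K u S)) /\
       supermodular_ne (fun S => \big[Rplus/R0]_(u : V) (pi u * K u S)%R)).
Proof.
split.
  move=> u ct_single; exists (commute_value p u); split.
    by move=> S S0; apply/commute_valueP/commute_time_exists.
  exact: commute_value_supermodular.
move=> pi [pi_ge0 _] ct_single; exists (commute_value p); split.
  by move=> u S pi_gt0 S0; apply/commute_valueP/commute_time_exists => //; apply: ct_single.
apply: supermodular_ne_sum => // u pi_gt0.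
exact: commute_value_supermodular (ct_single u pi_gt0).
Qed.
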